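(* Let $\lambda>0$, $a>0$ and $E\in\mathbb{R}$ be fixed, and for $\varepsilon>0$ consider the linear slow-fast system of SDEs \[ dX = -\lambda(X+Y)\,dt + E\sin(at)\,dt + dW_x,\qquad dY = \tfrac{1}{\varepsilon}(X-Y)\,dt + \tfrac{1}{\sqrt{\varepsilon}}\,dW_y, \] together with the approximate macroscopic model \[ d\bar X = -2\lambda \bar X\,dt + E\sin(at)\,dt + dW_x . \] The means $(\mu_X(t),\mu_Y(t))=(\mathbb{E}[X_t],\mathbb{E}[Y_t])$ satisfy the linear ODE $\mu_X'=-\lambda(\mu_X+\mu_Y)+E\sin(at)$, $\mu_Y'=\frac{1}{\varepsilon}(\mu_X-\mu_Y)$, and $\bar\mu_X(t)=\mathbb{E}[\bar X_t]$ satisfies $\bar\mu_X'=-2\lambda\bar\mu_X+E\sin(at)$. Let $\mu_X^{\mathrm{per},\varepsilon}$ denote the $X$-component of the unique $2\pi/a$-periodic solution of the first ODE system, and $\bar\mu_X^{\mathrm{per}}$ the unique $2\pi/a$-periodic solution of the second ODE. Then there exist constants $C>0$ and $\varepsilon_0>0$ (depending on $\lambda,a,E$) such that for all $\varepsilon\in(0,\varepsilon_0)$, \[ \Big\|\mu_X^{\mathrm{per},\varepsilon}-\bar\mu_X^{\mathrm{per}}\Big\|_{L^2([0,2\pi/a])}\le C\,\varepsilon, \] i.e. the $L_2$-error between the slow means of the full system and of the approximate macroscopic model decreases (at least) linearly to zero as $\varepsilon\to 0$.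
   Context: $W_x$ and $W_y$ are independent standard one-dimensional Brownian motions. The ''periodic solution'' is the invariant periodic orbit of the mean dynamics (the mean evolution started on the invariant curve), on which the error is measured in $L_2$ over one period of the forcing. *)

From Stdlib Require Import Reals.
From Coquelicot Require Import Coquelicot.
Open Scope R_scope.

(* L^2 norm of f on the interval [0, T] (used for continuous f, where the
   Riemann integral coincides with the Lebesgue integral). *)
Definition L2norm_0T (f : R -> R) (T : R) : R :=
  sqrt (RInt (fun t => (f t) ^ 2) 0 T).

Definition forcing_period (a : R) : R := 2 * PI / a.

Definition full_mean_solution (lam a E eps : R) (muX muY : R -> R) : Prop :=
  (forall t, is_derive muX t (- lam * (muX t + muY t) + E * sin (a * t))) /\
  (forall t, is_derive muY t (/ eps * (muX t - muY t))).

Definition macro_mean_solution (lam a E : R) (mub : R -> R) : Prop :=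
  forall t, is_derive mub t (- 2 * lam * mub t + E * sin (a * t)).

Definition periodic_with (T : R) (f : R -> R) : Prop :=
  forall t, f (t + T) = f t.

(** Each periodic quantity obeys a maximum principle: at a maximum of
    [f ^ 2] its derivative vanishes, so if [f' = - c f + g] then
    [|f| <= sup |g| / c] there, and hence everywhere.  An energy estimate
    bounds the means by [|E| / lam]; the fast relaxation
    [(muY - muX)' = - (muY - muX) / eps - muX'] makes the gap [muY - muX] of
    order [eps]; and the error [D = muX - mub] solves
    [D' = - 2 lam D - lam (muY - muX)], so [D] is of order [eps] as well,
    uniformly in time and therefore in [L^2] over a period. *)

From Stdlib Require Import Reals Lra Psatz.
From Coquelicot Require Import Coquelicot.
Open Scope R_scope.

Lemma is_derive_sqr (f : R -> R) (t df : R) :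
  is_derive f t df -> is_derive (fun t => f t ^ 2) t (2 * f t * df).
Proof.
  intros Hf.
  replace (2 * f t * df) with (INR 2 * df * f t ^ Init.Nat.pred 2) by (simpl; ring).
  now apply is_derive_pow.
Qed.

Lemma periodic_shift_int (T : R) (f : R -> R) :
  periodic_with T f -> forall k t, f (t + IZR k * T) = f t.
Proof.
  intros Hf k t; induction k as [|k IH|k IH] using Z.peano_ind.
  - now rewrite Rmult_0_l, Rplus_0_r.
  - rewrite succ_IZR, <- IH, <- (Hf (t + IZR k * T)); f_equal; ring.
  - rewrite <- IH, <- (Hf (t + IZR (Z.pred k) * T)).
    unfold Z.pred; rewrite plus_IZR; f_equal; ring.
Qed.

Lemma periodic_fundamental_domain (T : R) (f : R -> R) :
  0 < T -> periodic_with T f -> forall t, exists s, 0 <= s <= T /\ f t = f s.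
Proof.
  intros HT Hf t.
  set (k := Int_part (t / T)).
  destruct (base_Int_part (t / T)) as [Hlo Hhi]; fold k in Hlo, Hhi.
  assert (Hkt : IZR k * T <= t).
  { apply Rle_trans with (t / T * T); [apply Rmult_le_compat_r; lra | right; field; lra]. }
  assert (Htk : t <= (IZR k + 1) * T).
  { apply Rle_trans with (t / T * T); [right; field; lra | apply Rmult_le_compat_r; lra]. }
  exists (t - IZR k * T); split; [lra|].
  rewrite <- (periodic_shift_int T f Hf k (t - IZR k * T)); f_equal; ring.
Qed.

Lemma periodic_derive_max (T : R) (f df : R -> R) :
  0 < T -> periodic_with T f -> (forall t, is_derive f t (df t)) ->
  exists t0, (forall t, f t <= f t0) /\ df t0 = 0.
Proof.
  intros HT Hf Hdf.
  destruct (continuity_ab_maj f 0 T) as [t0 [Hmax _]]; [lra| |].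
  { intros t _; apply continuity_pt_filterlim, (@ex_derive_continuous R_AbsRing R_NormedModule).
    eexists; apply Hdf. }
  assert (Hglobal : forall t, f t <= f t0).
  { intros t; destruct (periodic_fundamental_domain T f HT Hf t) as [s [Hs ->]].
    now apply Hmax. }
  exists t0; split; [exact Hglobal|].
  pose (pr := exist _ (df t0) (proj1 (is_derive_Reals f t0 (df t0)) (Hdf t0))
                : derivable_pt f t0).
  change (df t0) with (derive_pt f t0 pr).
  apply (deriv_maximum f (t0 - 1) (t0 + 1)); try lra.
  intros x _ _; apply Hglobal.
Qed.

Lemma periodic_le_of_critical (T B : R) (f df : R -> R) :
  0 < T -> periodic_with T f -> (forall t, is_derive f t (df t)) ->
  (forall t, df t = 0 -> f t <= B) -> forall t, f t <= B.
Proof.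
  intros HT Hf Hdf Hcrit t.
  destruct (periodic_derive_max T f df HT Hf Hdf) as [t0 [Hmax Hd0]].
  apply Rle_trans with (f t0); [apply Hmax | now apply Hcrit].
Qed.

Lemma periodic_relaxation_bound (T c B : R) (f g : R -> R) :
  0 < T -> 0 < c -> periodic_with T f ->
  (forall t, is_derive f t (- c * f t + g t)) ->
  (forall t, Rabs (g t) <= B) ->
  forall t, Rabs (f t) <= B / c.
Proof.
  intros HT Hc Hf Hdf Hg t.
  assert (HB : 0 <= B / c).
  { apply Rdiv_le_0_compat; [|lra].
    apply Rle_trans with (Rabs (g 0)); [apply Rabs_pos | apply Hg]. }
  rewrite <- (Rabs_right (B / c)) by lra.
  apply Rsqr_le_abs_0; rewrite !Rsqr_pow2.
  revert t; apply (periodic_le_of_critical T _ (fun t => f t ^ 2)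
                     (fun t => 2 * f t * (- c * f t + g t)) HT).
  - intros t; simpl; now rewrite Hf.
  - intros t; apply is_derive_sqr, Hdf.
  - intros t Hcrit.
    assert (Hfix : f t = 0 \/ f t = g t / c).
    { destruct (Req_dec (f t) 0) as [H0|H0]; [now left|right].
      assert (Hrest : - c * f t + g t = 0)
        by (apply Rmult_eq_reg_l with (2 * f t); [rewrite Rmult_0_r; exact Hcrit | lra]).
      apply Rmult_eq_reg_l with c; [|lra].
      replace (c * (g t / c)) with (g t) by (field; lra); lra. }
    rewrite <- pow2_abs, <- (pow2_abs (B / c)).
    apply pow_incr; split; [apply Rabs_pos|].
    rewrite (Rabs_right (B / c)) by lra.
    destruct Hfix as [-> | ->].
    + rewrite Rabs_R0; exact HB.
    + rewrite Rabs_div, (Rabs_right c) by lra.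
      apply Rmult_le_compat_r; [apply Rlt_le, Rinv_0_lt_compat, Hc | apply Hg].
Qed.

Lemma L2norm_0T_le (T r : R) (f : R -> R) :
  0 <= T -> (forall t, continuous f t) ->
  (forall t, 0 <= t <= T -> Rabs (f t) <= r) ->
  L2norm_0T f T <= sqrt T * r.
Proof.
  intros HT Hcont Hf.
  assert (Hr : 0 <= r) by (apply Rle_trans with (Rabs (f 0)); [apply Rabs_pos | apply Hf; lra]).
  assert (Hint : RInt (fun t => f t ^ 2) 0 T <= T * r ^ 2).
  { replace (T * r ^ 2) with (RInt (fun _ => r ^ 2) 0 T)
      by (rewrite RInt_const; simpl; unfold scal; simpl; unfold mult; simpl; ring).
    apply RInt_le; [exact HT | | apply (@ex_RInt_const R_NormedModule) |].
    - apply (@ex_RInt_continuous R_CompleteNormedModule); intros t _.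
      apply (continuous_mult f (fun t => f t ^ 1)); [apply Hcont|].
      apply (continuous_mult f (fun _ => 1)); [apply Hcont | apply continuous_const].
    - intros t Ht; rewrite <- pow2_abs.
      apply pow_incr; split; [apply Rabs_pos | apply Hf; lra]. }
  unfold L2norm_0T.
  rewrite <- (sqrt_pow2 r Hr), <- sqrt_mult_alt by exact HT.
  now apply sqrt_le_1_alt.
Qed.

Section PeriodicMeans.

Variables (lam a E eps T : R) (muX muY mub : R -> R).
Hypotheses (Hlam : 0 < lam) (Heps : 0 < eps) (Heps_lam : eps * lam <= 1) (HT : 0 < T).
Hypotheses (Hfull : full_mean_solution lam a E eps muX muY)
  (HX : periodic_with T muX) (HY : periodic_with T muY).

Lemma full_mean_slow_bound t : Rabs (muX t) <= Rabs E / lam.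
Proof.
  destruct Hfull as [HdX HdY].
  assert (HE : Rabs E / lam = Rabs (E / lam))
    by (rewrite Rabs_div, (Rabs_right lam) by lra; reflexivity).
  rewrite HE; apply Rsqr_le_abs_0; rewrite !Rsqr_pow2.
  (* Energy [muX ^ 2 + eps lam muY ^ 2]: the weight cancels the [1 / eps] of the fast equation. *)
  apply Rle_trans with (muX t ^ 2 + eps * lam * muY t ^ 2).
  { assert (0 <= eps * lam * muY t ^ 2) by (apply Rmult_le_pos; nra). lra. }
  revert t; apply (periodic_le_of_critical T _ _
    (fun t => 2 * muX t * (- lam * (muX t + muY t) + E * sin (a * t))
              + eps * lam * (2 * muY t * (/ eps * (muX t - muY t)))) HT).
  - intros t; simpl; now rewrite HX, HY.
  - intros t; apply (is_derive_plus (fun t => muX t ^ 2) (fun t => eps * lam * muY t ^ 2)).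
    + apply is_derive_sqr, HdX.
    + apply is_derive_scal, is_derive_sqr, HdY.
  - intros t Hcrit.
    set (x := muX t) in *; set (y := muY t) in *; set (s := sin (a * t)) in *.
    assert (Hs : s ^ 2 <= 1) by (pose proof (SIN_bound (a * t)); fold s in H; nra).
    assert (Hbal : lam * (x ^ 2 + y ^ 2) = E * s * x).
    { replace (eps * lam * (2 * y * (/ eps * (x - y)))) with (lam * (2 * y * (x - y)))
        in Hcrit by (field; lra).
      nra. }
    assert (Hr : lam ^ 2 * (x ^ 2 + y ^ 2) <= E ^ 2).
    { destruct (Req_dec (x ^ 2 + y ^ 2) 0) as [H0|H0]; [rewrite H0; nra|].
      apply Rmult_le_reg_r with (x ^ 2 + y ^ 2); [nra|].
      replace (lam ^ 2 * (x ^ 2 + y ^ 2) * (x ^ 2 + y ^ 2)) with ((E * s * x) ^ 2)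
        by (rewrite <- Hbal; ring).
      replace ((E * s * x) ^ 2) with (E ^ 2 * (s ^ 2 * x ^ 2)) by ring.
      apply Rmult_le_compat_l; nra. }
    replace ((E / lam) ^ 2) with (E ^ 2 / lam ^ 2) by (field; lra).
    apply Rle_trans with (x ^ 2 + y ^ 2); [nra|].
    apply Rmult_le_reg_l with (lam ^ 2); [nra|].
    replace (lam ^ 2 * (E ^ 2 / lam ^ 2)) with (E ^ 2) by (field; lra).
    exact Hr.
Qed.

Lemma full_mean_fast_bound t : Rabs (muY t) <= Rabs E / lam.
Proof.
  replace (Rabs E / lam) with (/ eps * (Rabs E / lam) / / eps) by (field; lra).
  revert t; apply (periodic_relaxation_bound T (/ eps) _ muY (fun t => / eps * muX t) HT).
  - now apply Rinv_0_lt_compat.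
  - exact HY.
  - intros t; replace (- / eps * muY t + / eps * muX t) with (/ eps * (muX t - muY t)) by ring.
    apply Hfull.
  - intros t; rewrite Rabs_mult, (Rabs_right (/ eps)) by (apply Rle_ge, Rlt_le, Rinv_0_lt_compat, Heps).
    apply Rmult_le_compat_l; [apply Rlt_le, Rinv_0_lt_compat, Heps | apply full_mean_slow_bound].
Qed.

Lemma full_mean_slow_drift_bound t :
  Rabs (- lam * (muX t + muY t) + E * sin (a * t)) <= 3 * Rabs E.
Proof.
  pose proof (full_mean_slow_bound t) as Hx; pose proof (full_mean_fast_bound t) as Hy.
  assert (Hsin : Rabs (E * sin (a * t)) <= Rabs E).
  { rewrite Rabs_mult; pose proof (Rabs_pos E).
    pose proof (SIN_bound (a * t)); assert (Rabs (sin (a * t)) <= 1) by (apply Rabs_le; lra).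
    nra. }
  assert (Hlx : lam * Rabs (muX t) <= Rabs E)
    by (apply Rmult_le_compat_l with (r := lam) in Hx; [field_simplify in Hx; lra | lra]).
  assert (Hly : lam * Rabs (muY t) <= Rabs E)
    by (apply Rmult_le_compat_l with (r := lam) in Hy; [field_simplify in Hy; lra | lra]).
  eapply Rle_trans; [apply Rabs_triang|].
  rewrite Rabs_mult, Rabs_Ropp, (Rabs_right lam) by lra.
  pose proof (Rabs_triang (muX t) (muY t)); nra.
Qed.

Lemma full_mean_fast_slow_gap t : Rabs (muY t - muX t) <= 3 * Rabs E * eps.
Proof.
  destruct Hfull as [HdX HdY].
  replace (3 * Rabs E * eps) with (3 * Rabs E / / eps) by (field; lra).
  revert t; apply (periodic_relaxation_bound T (/ eps) _ (fun t => muY t - muX t)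
    (fun t => - (- lam * (muX t + muY t) + E * sin (a * t))) HT).
  - now apply Rinv_0_lt_compat.
  - intros t; simpl; now rewrite HX, HY.
  - intros t.
    replace (- / eps * (muY t - muX t) + - (- lam * (muX t + muY t) + E * sin (a * t)))
      with (/ eps * (muX t - muY t) - (- lam * (muX t + muY t) + E * sin (a * t))) by ring.
    apply (is_derive_minus muY muX); [apply HdY | apply HdX].
  - intros t; rewrite Rabs_Ropp; apply full_mean_slow_drift_bound.
Qed.

Hypotheses (Hmacro : macro_mean_solution lam a E mub) (Hb : periodic_with T mub).

Lemma macro_mean_error_bound t : Rabs (muX t - mub t) <= 3 / 2 * Rabs E * eps.
Proof.
  replace (3 / 2 * Rabs E * eps) with (lam * (3 * Rabs E * eps) / (2 * lam)) by (field; lra).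
  revert t; apply (periodic_relaxation_bound T (2 * lam) _ (fun t => muX t - mub t)
    (fun t => - lam * (muY t - muX t)) HT).
  - lra.
  - intros t; simpl; now rewrite HX, Hb.
  - intros t.
    replace (- (2 * lam) * (muX t - mub t) + - lam * (muY t - muX t))
      with ((- lam * (muX t + muY t) + E * sin (a * t)) - (- 2 * lam * mub t + E * sin (a * t)))
      by ring.
    apply (is_derive_minus muX mub); [apply Hfull | apply Hmacro].
  - intros t; rewrite Rabs_mult, Rabs_Ropp, (Rabs_right lam) by lra.
    apply Rmult_le_compat_l; [lra | apply full_mean_fast_slow_gap].
Qed.

End PeriodicMeans.

Theorem mainTheorem1 (lam a E : R) (Hlam : 0 < lam) (Ha : 0 < a) :
  exists C eps0 : R, 0 < C /\ 0 < eps0 /\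
    forall eps : R, 0 < eps < eps0 ->
    forall muX muY mub : R -> R,
      full_mean_solution lam a E eps muX muY ->
      periodic_with (forcing_period a) muX ->
      periodic_with (forcing_period a) muY ->
      macro_mean_solution lam a E mub ->
      periodic_with (forcing_period a) mub ->
      L2norm_0T (fun t => muX t - mub t) (forcing_period a) <= C * eps.
Proof.
  set (T := forcing_period a).
  assert (HT : 0 < T) by (apply Rdiv_lt_0_compat; [pose proof PI_RGT_0 |]; lra).
  assert (HsqrtT : 0 < sqrt T) by now apply sqrt_lt_R0.
  exists (sqrt T * (3 / 2 * Rabs E + 1)), (/ lam).
  split; [pose proof (Rabs_pos E); nra|].
  split; [now apply Rinv_0_lt_compat|].
  intros eps [Heps Heps0] muX muY mub Hfull HX HY Hmacro Hb.
  assert (Heps_lam : eps * lam <= 1).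
  { apply Rmult_lt_compat_r with (r := lam) in Heps0; [|lra].
    rewrite Rinv_l in Heps0; lra. }
  apply Rle_trans with (sqrt T * (3 / 2 * Rabs E * eps)); [|nra].
  apply L2norm_0T_le; [lra | |].
  - intros t; apply (@ex_derive_continuous R_AbsRing R_NormedModule); eexists.
    apply (is_derive_minus muX mub); [apply Hfull | apply Hmacro].
  - intros t _; now apply (macro_mean_error_bound lam a E eps T muX muY mub).
Qed.
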